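(* With the notation of the context, \[ z^+(\beta)=x_1^\uparrow(\beta)-\tfrac1\theta,\qquad z^-(\beta)=x_\theta^\downarrow(\beta)-\tfrac1\theta, \] where $z^+(\beta)=\lim_{h\downarrow0}\frac{z(\beta,h)-z(\beta,0)}{h}$ and $z^-(\beta)=\lim_{h\uparrow0}\frac{z(\beta,h)-z(\beta,0)}{h}$.
   Context: Fix $\theta\in\{2,3,\dots\}$, $\beta>0$. $\Delta=\{x\in[0,1]^\theta:x_1\ge\dots\ge x_\theta,\ \sum x_i=1\}$; for $x,y\in\Delta$, $y\trianglerighteq x$ means $\sum_{j\le i}y_j\ge\sum_{j\le i}x_j$ for all $i$. $\phi_\beta(x)=\frac\beta2\big(\sum_i x_i^2-1\big)-\sum_i x_i\log x_i$, $g_\beta(x)=\max_{y\in\Delta,\,y\trianglerighteq x}\phi_\beta(y)$, and $z(\beta,h)=\max_{x\in\Delta}\big(h(x_1-\tfrac1\theta)+g_\beta(x)\big)$ for $h\ge0$, $z(\beta,h)=\max_{x\in\Delta}\big(h(x_\theta-\tfrac1\theta)+g_\beta(x)\big)$ for $h\le0$. $x^\uparrow(\beta)\in\Delta$ is a maximizer of $\phi_\beta$ over $\Delta$ whose first coordinate is maximal among all maximizers, and $x^\downarrow(\beta)\in\Delta$ is a maximizer of $\phi_\beta$ whose last coordinate $x_\theta$ is minimal among all maximizers. *)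

From HB Require Import structures.
From mathcomp Require Import all_boot all_order all_algebra.
From mathcomp Require Import all_classical all_reals all_analysis.
Set Implicit Arguments. Unset Strict Implicit. Unset Printing Implicit Defensive.
Import Order.TTheory GRing.Theory Num.Theory.
Local Open Scope classical_set_scope.
Local Open Scope ring_scope.

Section Defs.
Variable R : realType.
Variable theta : nat.

Definition Delta : set ('I_theta -> R) :=
  [set x | (forall i, 0 <= x i <= 1) /\
           (forall i j : 'I_theta, (i <= j)%N -> x j <= x i) /\
           \sum_(i < theta) x i = 1].

Definition dominates (y x : 'I_theta -> R) : Prop :=
  forall i : 'I_theta,
    \sum_(j < theta | (j <= i)%N) x j <= \sum_(j < theta | (j <= i)%N) y j.

Definition phi (beta : R) (x : 'I_theta -> R) : R :=
  beta / 2 * (\sum_(i < theta) x i ^+ 2 - 1) - \sum_(i < theta) x i * ln (x i).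

Definition g (beta : R) (x : 'I_theta -> R) : R :=
  sup [set phi beta y | y in [set y | Delta y /\ dominates y x]].

Definition is_phi_maximizer (beta : R) (x : 'I_theta -> R) : Prop :=
  Delta x /\ forall y, Delta y -> phi beta y <= phi beta x.
End Defs.

Section Defs2.
Variable R : realType.
Variable n : nat.
Local Notation theta := n.+2.

Definition z (beta h : R) : R :=
  if 0 <= h then
    sup [set h * (x ord0 - theta%:R^-1) + g beta x | x in @Delta R theta]
  else
    sup [set h * (x ord_max - theta%:R^-1) + g beta x | x in @Delta R theta].

Definition is_x_up (beta : R) (x : 'I_theta -> R) : Prop :=
  is_phi_maximizer beta x /\
  forall y : 'I_theta -> R, is_phi_maximizer beta y -> y ord0 <= x ord0.

Definition is_x_down (beta : R) (x : 'I_theta -> R) : Prop :=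
  is_phi_maximizer beta x /\
  forall y : 'I_theta -> R, is_phi_maximizer beta y -> x ord_max <= y ord_max.
End Defs2.

(* For h >= 0, majorization can only increase the first coordinate, so the
   tilt h (x_1 - 1/theta) can be pulled inside g: z(beta, h) is the supremum of
   h (y_1 - 1/theta) + phi_beta(y) over Delta (symmetrically with x_theta for
   h <= 0).  The right derivative at 0 of such a tilted supremum is the tilt of
   a maximizer x0 of phi_beta as soon as points whose tilt exceeds that of x0
   by e lose a uniform margin against x0.  By compactness of Delta and
   continuity of phi_beta, this margin exists when x0 has the largest tilt
   among all maximizers, which is how x^up and x^down are chosen. *)

From HB Require Import structures.
From mathcomp Require Import all_boot all_order all_algebra.
From mathcomp Require Import all_classical all_reals all_analysis.
From mathcomp Require Import lra.
Import Order.TTheory GRing.Theory Num.Theory numFieldNormedType.Exports.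
Import ArrowAsProduct.
Local Open Scope classical_set_scope.
Local Open Scope ring_scope.

Lemma compact_gap {T : topologicalType} {R : realType} {f : T -> R} {K : set T}
    (M : R) :
  compact K -> {within K, continuous f} -> (forall y, K y -> f y < M) ->
  exists2 d, 0 < d & forall y, K y -> f y <= M - d.
Proof.
move=> Kc fc fltM; have [[y0 Ky0]|K0] := pselect (K !=set0); last first.
  by exists 1 => // y Ky; exfalso; apply: K0; exists y.
have [c /set_mem cK cmax] := compact_EVT_max (ex_intro _ y0 Ky0) Kc fc.
exists (M - f c); first by rewrite subr_gt0 fltM.
by move=> y /mem_set Ky; rewrite opprB addrC subrK cmax.
Qed.

Section TiltedSup.
Context {R : realType} {T : Type}.

Definition tilted_sup (P : set T) (f a : T -> R) (h : R) : R :=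
  sup [set h * a y + f y | y in P].

Context {P : set T} {f a : T -> R} {x0 : T} {B : R}.
Hypotheses (Px0 : P x0) (f_max : forall y, P y -> f y <= f x0)
  (a_ub : forall y, P y -> a y <= B).

Lemma has_sup_tilted {h} : 0 <= h -> has_sup [set h * a y + f y | y in P].
Proof.
move=> h0; split; first by exists (h * a x0 + f x0), x0.
exists (h * B + f x0) => _ [y Py <-].
by rewrite lerD ?f_max ?ler_wpM2l ?a_ub.
Qed.

Lemma tilted_sup_ge {h} : 0 <= h -> h * a x0 + f x0 <= tilted_sup P f a h.
Proof. by move=> h0; apply: (sup_upper_bound (has_sup_tilted h0)); exists x0. Qed.

Lemma tilted_sup0 : tilted_sup P f a 0 = f x0.
Proof.
apply/eqP; rewrite eq_le; apply/andP; split.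
  apply: ge_sup; first by exists (0 * a x0 + f x0), x0.
  by move=> _ [y Py <-]; rewrite mul0r add0r f_max.
by have := tilted_sup_ge (lexx 0); rewrite mul0r add0r.
Qed.

Hypothesis gap : forall e, 0 < e -> exists2 d, 0 < d &
  forall y, P y -> a x0 + e <= a y -> f y <= f x0 - d.

Lemma tilted_sup_le {e} : 0 < e -> exists2 d, 0 < d &
  forall h, 0 <= h -> h < d -> tilted_sup P f a h <= f x0 + h * (a x0 + e).
Proof.
move=> e0; have [d d0 fd] := gap _ e0.
(* Below this step size, the gain of a far point y, at most h (B - a x0),
   never outweighs its loss d. *)
have k0 : 0 < B - a x0 + 1 by have := a_ub _ Px0; lra.
exists (d / (B - a x0 + 1)) => [|h h0]; first by rewrite divr_gt0.
rewrite ltr_pdivlMr // => hd.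
apply: ge_sup; first by exists (h * a x0 + f x0), x0.
move=> _ [y Py <-]; have := f_max _ Py; have := a_ub _ Py.
have [|aye] := ltP (a y) (a x0 + e); first nra.
have := fd y Py aye; nra.
Qed.

Lemma tilted_sup_right_derivative :
  (tilted_sup P f a h - f x0) / h @[h --> 0^'+] --> a x0.
Proof.
apply/cvgrPdist_le => e e0; have [d d0 Vle] := tilted_sup_le e0.
near=> h.
have h0 : 0 < h by near: h; exact: nbhs_right_gt.
have hd : h < d by near: h; exact: nbhs_right_lt.
have lo := tilted_sup_ge (ltW h0); have up := Vle h (ltW h0) hd.
rewrite ler_distlC ler_pdivlMr // ler_pdivrMr //; apply/andP; split; nra.
Unshelve. all: by end_near.
Qed.

End TiltedSup.

Section XLnX.
Context {R : realType}.

Lemma xlnx_ge {x : R} : 0 < x -> - (2 * Num.sqrt x) <= x * ln x.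
Proof.
move=> x0; set y := Num.sqrt x.
have y0 : 0 < y by rewrite sqrtr_gt0.
have xy : x = y ^+ 2 by rewrite sqr_sqrtr // ltW.
have lny : - ln y < y^-1.
  by rewrite -lnV ?posrE //; apply: ln_sublinear; rewrite invr_gt0.
have : y ^+ 2 * - ln y <= y ^+ 2 * y^-1 by rewrite ler_pM2l ?exprn_gt0 // ltW.
by rewrite xy lnXn // expr2 mulfK ?gt_eqF //; lra.
Qed.

(* [ln] vanishes on nonpositive reals, so [x * ln x] is continuous on all of [R]. *)
Lemma continuous_xlnx : continuous (fun x : R => x * ln x).
Proof.
move=> t; case: (ltgtP t 0) => [t_lt0|t_gt0|->].
- apply: cvg_near_cst; near=> x.
  by rewrite !ln0 ?mulr0 ?ltW //; near: x; exact: lt_nbhsl.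
- exact: cvgM cvg_id (continuous_ln t_gt0).
- apply/cvgrPdist_le => e e0; rewrite /= mul0r.
  have d0 : 0 < Num.min 1 ((e / 2) ^+ 2) by rewrite lt_min ltr01 exprn_gt0 // divr_gt0.
  near=> x; rewrite sub0r normrN.
  have : `|x| <= Num.min 1 ((e / 2) ^+ 2) by near: x; exact: (@nbhs0_le _ R^o _ d0).
  rewrite le_min => /andP[x1 xe].
  have [x_le0|x_gt0] := lerP x 0; first by rewrite ln0 // mulr0 normr0 ltW.
  rewrite gtr0_norm // in x1 xe.
  have sqrtx : Num.sqrt x <= e / 2.
    have e2 : 0 <= e / 2 by rewrite divr_ge0 // ltW.
    by rewrite -(ger0_norm e2) -sqrtr_sqr ler_sqrt // sqr_ge0.
  rewrite ler0_norm ?pmulr_rle0 ?ln_le0 //; have := xlnx_ge x_gt0; lra.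
Unshelve. all: by end_near.
Qed.

End XLnX.

Section Simplex.
Context {R : realType} {m : nat}.
Implicit Types x y : 'I_m -> R.

Lemma Delta_bounds {x} i : Delta x -> 0 <= x i <= 1.
Proof. by case=> + _; apply. Qed.

Lemma continuous_coord i : continuous (fun x : 'I_m -> R => x i).
Proof. exact: (@proj_continuous _ (fun=> R) i). Qed.

Lemma continuous_sum_coord : continuous (fun x : 'I_m -> R => \sum_(i < m) x i).
Proof.
by apply: continuous_big => [|i _]; [exact: add_continuous|exact: continuous_coord].
Qed.

Lemma closed_Delta : closed (@Delta R m).
Proof.
move=> x clx.
have closed_super (C : set ('I_m -> R)) : closed C -> @Delta R m `<=` C -> C x.
  by move=> Cc DC; apply/Cc/(closureS DC).
split; [move=> i; apply/andP; split | split; [move=> i j ij|]].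
- apply: (closed_super (fun x => 0 <= x i)).
    exact: (continuous_closedP _).1 (continuous_coord i) _ (@closed_ge _ 0).
  by move=> y /(Delta_bounds i)/andP[].
- apply: (closed_super (fun x => x i <= 1)).
    exact: (continuous_closedP _).1 (continuous_coord i) _ (@closed_le _ 1).
  by move=> y /(Delta_bounds i)/andP[].
- rewrite -subr_ge0; apply: (closed_super (fun x => 0 <= x i - x j)).
    apply: (continuous_closedP (fun x => x i - x j)).1 _ _ (@closed_ge _ 0) => y.
    exact: cvgB (continuous_coord i y) (continuous_coord j y).
  by move=> y [_ [yle _]]; rewrite subr_ge0 yle.
- apply: (closed_super (fun x => \sum_(i < m) x i = 1)).
    exact: (continuous_closedP _).1 continuous_sum_coord _ (@closed_eq _ 1).
  by move=> y [_ []].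
Qed.

Lemma compact_Delta : compact (@Delta R m).
Proof.
apply: (subclosed_compact closed_Delta (tychonoff (fun=> @segment_compact R 0 1))).
by move=> x xD i; rewrite /= in_itv; exact: Delta_bounds.
Qed.

Lemma tilt_coord_le_norm (h c : R) y i : 0 <= c <= 1 -> Delta y ->
  h * (y i - c) <= `|h|.
Proof.
move=> /andP[c_ge0 c_le1] /(Delta_bounds i)/andP[y_ge0 y_le1].
by have [h0|h0] := lerP 0 h; [rewrite ger0_norm | rewrite ltr0_norm]; nra.
Qed.

Context {beta : R}.

Lemma continuous_phi : continuous (@phi R m beta).
Proof.
have sum_cont (F : R -> R) : continuous F ->
    continuous (fun x : 'I_m -> R => \sum_(i < m) F (x i)).
  move=> Fc; apply: continuous_big => [|i _ x]; first exact: add_continuous.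
  exact: continuous_comp (continuous_coord i x) (Fc _).
have sq_cont : continuous (fun r : R => r ^+ 2).
  by move=> r; exact: cvgM cvg_id cvg_id.
move=> x; have := cvgB (cvgM (cvg_cst (beta / 2 : R)) (cvgB (sum_cont _ sq_cont x)
  (cvg_cst (1 : R)))) (sum_cont _ (@continuous_xlnx R) x).
exact.
Qed.

Lemma maximizer_gap {x0} {a : ('I_m -> R) -> R} :
  continuous a -> is_phi_maximizer beta x0 ->
  (forall y, is_phi_maximizer beta y -> a y <= a x0) ->
  forall e, 0 < e -> exists2 d, 0 < d &
    forall y, Delta y -> a x0 + e <= a y -> phi beta y <= phi beta x0 - d.
Proof.
move=> ac [x0D x0max] a_max e e0.
have Kc : compact (@Delta R m `&` [set y | a x0 + e <= a y]).
  apply: (subclosed_compact _ compact_Delta) => //; apply: closedI closed_Delta _.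
  exact: (continuous_closedP _).1 ac _ (@closed_ge _ _).
have [|d d0 Kd] := compact_gap (phi beta x0) Kc (continuous_subspaceT continuous_phi).
  move=> y [yD /= aye]; rewrite ltNge; apply/negP => phiy.
  have : is_phi_maximizer beta y by split=> // w wD; apply: le_trans (x0max w wD) phiy.
  by move/a_max; lra.
by exists d => // y yD aye; apply: Kd.
Qed.

End Simplex.

Section Majorization.
Context {R : realType} {m : nat} {beta : R} {x0 : 'I_m -> R}.
Hypothesis x0max : is_phi_maximizer beta x0.
Implicit Types x y : 'I_m -> R.

Lemma has_sup_dominating {x} : Delta x ->
  has_sup [set phi beta y | y in [set y | Delta y /\ dominates y x]].
Proof.
move=> xD; split; first by exists (phi beta x), x; split.
by exists (phi beta x0) => _ [y [yD _] <-]; apply: x0max.2.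
Qed.

Lemma g_le_max x : Delta x -> g beta x <= phi beta x0.
Proof.
move=> xD; apply: ge_sup; first by exists (phi beta x), x; split.
by move=> _ [y [yD _] <-]; apply: x0max.2.
Qed.

Lemma phi_le_g x : Delta x -> phi beta x <= g beta x.
Proof.
by move=> xD; apply: (sup_upper_bound (has_sup_dominating xD)); exists x; split.
Qed.

Lemma sup_add_g_phi {w : ('I_m -> R) -> R} {B : R} :
  (forall y, Delta y -> w y <= B) ->
  (forall x y, Delta x -> Delta y -> dominates y x -> w x <= w y) ->
  sup [set w x + g beta x | x in @Delta R m] =
  sup [set w y + phi beta y | y in @Delta R m].
Proof.
move=> w_ub w_mono; have x0D := x0max.1.
have has_sup_add (F : ('I_m -> R) -> R) : (forall y, Delta y -> F y <= phi beta x0) ->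
    has_sup [set w y + F y | y in @Delta R m].
  move=> F_ub; split; first by exists (w x0 + F x0), x0.
  by exists (B + phi beta x0) => _ [y yD <-]; rewrite lerD ?w_ub ?F_ub.
have sup_phi := has_sup_add _ x0max.2; have sup_g := has_sup_add _ g_le_max.
apply/eqP; rewrite eq_le; apply/andP; split.
  apply: ge_sup; first by exists (w x0 + g beta x0), x0.
  move=> _ [x xD <-]; rewrite -lerBrDl.
  apply: ge_sup; first by exists (phi beta x), x; split.
  move=> _ [y [yD yx] <-]; rewrite lerBrDl.
  apply: le_trans (sup_upper_bound sup_phi _); last by exists y.
  by rewrite lerD2r w_mono.
apply: ge_sup; first by exists (w x0 + phi beta x0), x0.
move=> _ [y yD <-]; apply: le_trans (sup_upper_bound sup_g _); last by exists y.
by rewrite lerD2l phi_le_g.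
Qed.

End Majorization.

Lemma dominates_head {R : realType} {m : nat} {x y : 'I_m.+1 -> R} :
  dominates y x -> x ord0 <= y ord0.
Proof.
have sum_ord0 (F : 'I_m.+1 -> R) : \sum_(j < m.+1 | (j <= @ord0 m)%N) F j = F ord0.
  by apply: big_pred1 => j /=; rewrite leqn0 -[0%N]/(val (@ord0 m)) val_eqE.
by move/(_ ord0); rewrite !sum_ord0.
Qed.

Lemma dominates_last {R : realType} {n : nat} {x y : 'I_n.+2 -> R} :
  Delta x -> Delta y -> dominates y x -> y ord_max <= x ord_max.
Proof.
move=> [_ [_ sum_x]] [_ [_ sum_y]] /(_ (inord n)).
have sum_but_last (F : 'I_n.+2 -> R) :
    \sum_(j < n.+2 | (j <= @inord n.+1 n)%N) F j = \sum_(j < n.+2) F j - F ord_max.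
  rewrite [X in _ = X - _](bigD1 ord_max) //= addrC addrK.
  by apply: eq_bigl => j; rewrite inordK // -ltnS ltn_neqAle -ltnS ltn_ord andbT.
by rewrite !sum_but_last sum_x sum_y lerD2l lerN2.
Qed.

Section OneSidedDerivatives.
Variables (R : realType) (n : nat) (beta : R).
Local Notation c := ((n.+2)%:R^-1 : R).

Let c_bounds : 0 <= c <= 1.
Proof. by rewrite invr_ge0 ler0n invf_le1 ?ltr0n // ler1n. Qed.

Let head_tilt_le1 (y : 'I_n.+2 -> R) : Delta y -> y ord0 - c <= 1.
Proof.
move=> /(Delta_bounds ord0)/andP[_ y_le1]; have /andP[c_ge0 _] := c_bounds.
by rewrite lerBlDr (le_trans y_le1) // lerDl.
Qed.

Let last_tilt_le1 (y : 'I_n.+2 -> R) : Delta y -> c - y ord_max <= 1.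
Proof.
move=> /(Delta_bounds ord_max)/andP[y_ge0 _]; have /andP[_ c_le1] := c_bounds.
by rewrite lerBlDr (le_trans c_le1) // lerDl.
Qed.

Variable x0 : 'I_n.+2 -> R.
Hypothesis x0max : is_phi_maximizer beta x0.

Lemma z_nonneg h : 0 <= h ->
  z n beta h = tilted_sup (@Delta R n.+2) (phi beta) (fun y => y ord0 - c) h.
Proof.
move=> h0; rewrite /z h0; apply: (sup_add_g_phi x0max (B := `|h|)).
  by move=> y; exact: tilt_coord_le_norm c_bounds.
by move=> x y _ _ /dominates_head xy; rewrite ler_wpM2l // lerD2r.
Qed.

Lemma z_neg h : h < 0 ->
  z n beta h = tilted_sup (@Delta R n.+2) (phi beta) (fun y => c - y ord_max) (- h).
Proof.
move=> h0; rewrite /z leNgt h0 /=.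
rewrite (sup_add_g_phi x0max (w := fun x => h * (x ord_max - c)) (B := `|h|)).
- by congr sup; apply: eq_imagel => y _; rewrite mulNr -mulrN opprB.
- by move=> y; exact: tilt_coord_le_norm c_bounds.
- move=> x y xD yD /(dominates_last xD yD) yx.
  by apply: ler_wnM2l; [exact: ltW | rewrite lerD2r].
Qed.

Lemma z_at0 : z n beta 0 = phi beta x0.
Proof.
by rewrite z_nonneg // (tilted_sup0 x0max.1 x0max.2 head_tilt_le1).
Qed.

Lemma z_right_derivative :
  (forall y : 'I_n.+2 -> R, is_phi_maximizer beta y -> y ord0 <= x0 ord0) ->
  (z n beta h - z n beta 0) / h @[h --> 0^'+] --> x0 ord0 - c.
Proof.
move=> x0_first; rewrite z_at0.
have a_cont : continuous (fun y : 'I_n.+2 -> R => y ord0 - c).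
  by move=> y; apply: cvgB (continuous_coord _ y) (cvg_cst _).
have gap := maximizer_gap a_cont x0max (fun y ymax => lerB (x0_first y ymax) (lexx _)).
apply: cvg_trans (tilted_sup_right_derivative x0max.1 x0max.2 head_tilt_le1 gap).
apply: near_eq_cvg; near=> h; rewrite z_nonneg //.
Unshelve. all: by end_near.
Qed.

Lemma z_left_derivative :
  (forall y : 'I_n.+2 -> R, is_phi_maximizer beta y -> x0 ord_max <= y ord_max) ->
  (z n beta h - z n beta 0) / h @[h --> 0^'-] --> x0 ord_max - c.
Proof.
move=> x0_last; rewrite z_at0 cvg_at_leftNP oppr0 -[x0 ord_max - c]opprB.
have a_cont : continuous (fun y : 'I_n.+2 -> R => c - y ord_max).
  by move=> y; apply: cvgB (cvg_cst _) (continuous_coord _ y).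
have gap := maximizer_gap a_cont x0max (fun y ymax => lerB (lexx _) (x0_last y ymax)).
apply: cvg_trans (cvgN (tilted_sup_right_derivative x0max.1 x0max.2 last_tilt_le1 gap)).
apply: near_eq_cvg; near=> h.
rewrite /= z_neg ?oppr_lt0 // opprK invrN mulrN.
Unshelve. all: by end_near.
Qed.

End OneSidedDerivatives.

Theorem theorem4p1 (R : realType) (n : nat) (beta : R) (hbeta : 0 < beta)
    (xup xdown : 'I_n.+2 -> R) :
  is_x_up beta xup -> is_x_down beta xdown ->
  ((fun h => (z n beta h - z n beta 0) / h) x @[x --> (0:R)^'+]
     --> xup ord0 - (n.+2)%:R^-1) /\
  ((fun h => (z n beta h - z n beta 0) / h) x @[x --> (0:R)^'-]
     --> xdown ord_max - (n.+2)%:R^-1).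
Proof.
move=> [xup_max xup_first] [xdown_max xdown_last].
by split; [exact: z_right_derivative | exact: z_left_derivative].
Qed.
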